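(* For $a\in(0,1)$ define $$F(a):=-\int_0^{\pi}\operatorname{Im}\bigl\{w_a(t)\bigr\}\,\frac{dt}{\sqrt{a+1/a-2\cos t}},$$ where $w_a:[0,\pi]\to\mathbb{C}$ is the continuous fourth root of $e^{3it}\,\frac{1-ae^{it}}{e^{it}-a}$ (i.e. $w_a(t)^4=e^{3it}\frac{1-ae^{it}}{e^{it}-a}$) with $w_a(0)=1$. Let $\alpha\in(0,1)$ be the unique zero of $F$ in $(0,1)$. Then $\alpha>\tfrac12$.
   Context: It is established (independently of this statement) that $F$ vanishes at exactly one point of $(0,1)$, which is denoted $\alpha$; $F(a)$ is negative for $a$ close to $0$ and $F(a)\to+\infty$ as $a\to1$. *)

From Stdlib Require Import Reals.
From Coquelicot Require Import Coquelicot.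
Open Scope R_scope.

Definition cis (t : R) : C := (cos t, sin t).

Definition g_fun (a t : R) : C :=
  Cmult (Cpow (cis t) 3)
        (Cdiv (Cminus (RtoC 1) (Cmult (RtoC a) (cis t)))
              (Cminus (cis t) (RtoC a))).

(* w is "the" continuous fourth root of g_a on [0,pi] with w(0) = 1
   (such a w is unique on [0,pi]). Continuity is continuity of the
   restriction to [0,pi]. *)
Definition is_w (a : R) (w : R -> C) : Prop :=
  (forall t, 0 <= t <= PI ->
     filterlim w (within (fun x => 0 <= x <= PI) (locally t)) (locally (w t)))
  /\ (forall t, 0 <= t <= PI -> Cpow (w t) 4 = g_fun a t)
  /\ w 0 = RtoC 1.

Definition F_with (a : R) (w : R -> C) : R :=
  - RInt (fun t => Im (w t) / sqrt (a + / a - 2 * cos t)) 0 PI.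

(* For [a <= 1/2] we show [F(a) < 0].  The map
   [u(t) = e^{it} (1 - a e^{it}) / |1 - a e^{it}|] is a continuous square root
   of [g_a] with [u(0) = 1]; as [w^2] is another one with the same value at [0],
   [w^2 = u] on [[0, pi]].  When [a <= 1/2], [Im u(t) = sin t (1 - 2 a cos t) / |1 - a e^{it}|]
   is positive on [(0, pi)].  Along the path [w], which starts at [1], the quantity
   [Re w + Im w] never vanishes since its square is [|w|^2 + Im (w^2) > 0]; so it
   stays positive, and together with [Re w * Im w > 0] this forces [Im w > 0] on
   [(0, pi)], making the integral in [F(a)] positive. *)

From Stdlib Require Import Reals Lra.
From Coquelicot Require Import Coquelicot.
Open Scope R_scope.

Lemma Cmult_integral (z u : C) : (z * u = 0)%C -> z = 0 \/ u = 0.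
Proof.
  intros H. apply (f_equal Cmod) in H. rewrite Cmod_mult, Cmod_0 in H.
  destruct (Rmult_integral _ _ H); [left | right]; apply Cmod_eq_0; assumption.
Qed.

Lemma Csqr_eq_cases (z u : C) : Cpow z 2 = Cpow u 2 -> z = u \/ z = (- u)%C.
Proof.
  intros H.
  assert (Hprod : ((z - u) * (z + u) = 0)%C).
  { replace ((z - u) * (z + u))%C with (Cpow z 2 - Cpow u 2)%C by ring.
    rewrite H. ring. }
  destruct (Cmult_integral _ _ Hprod) as [E | E]; [left | right].
  - replace z with (z - u + u)%C by ring. rewrite E. ring.
  - replace z with (z + u - u)%C by ring. rewrite E. ring.
Qed.

Lemma Csqr_components (z : C) : Cpow z 2 = (Re z ^ 2 - Im z ^ 2, 2 * Re z * Im z).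
Proof. destruct z as [x y]. unfold Cpow, Cmult, Re, Im; simpl. f_equal; ring. Qed.

Lemma Re_Csqr (z : C) : Re (Cpow z 2) = Re z ^ 2 - Im z ^ 2.
Proof. rewrite Csqr_components. reflexivity. Qed.

Lemma Im_Csqr (z : C) : Im (Cpow z 2) = 2 * Re z * Im z.
Proof. rewrite Csqr_components. reflexivity. Qed.

Lemma Cnorm2_pos (z : C) : z <> 0 -> 0 < Re z ^ 2 + Im z ^ 2.
Proof.
  intros Hz. rewrite <- Cmod2_alt. apply pow_lt, Cmod_gt_0, Hz.
Qed.

Lemma continuous_Re (f : R -> C) x :
  continuous f x -> continuous (fun y => Re (f y)) x.
Proof.
  intros Hf. apply (continuous_comp f fst); [exact Hf |].
  rewrite (surjective_pairing (f x)). apply continuous_fst.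
Qed.

Lemma continuous_Im (f : R -> C) x :
  continuous f x -> continuous (fun y => Im (f y)) x.
Proof.
  intros Hf. apply (continuous_comp f snd); [exact Hf |].
  rewrite (surjective_pairing (f x)). apply continuous_snd.
Qed.

Lemma continuous_C (f : R -> C) x :
  continuous (fun y => Re (f y)) x -> continuous (fun y => Im (f y)) x ->
  continuous f x.
Proof.
  intros Hre Him.
  apply (continuous_ext (fun y : R => (Re (f y), Im (f y)))).
  { intros y. symmetry. apply surjective_pairing. }
  apply (continuous_comp_2 _ _ pair); [exact Hre | exact Him |].
  apply (continuous_ext (fun p => p)); [intros [] ; reflexivity | apply continuous_id].
Qed.

Lemma continuous_Csqr (f : R -> C) x :
  continuous f x -> continuous (fun y => Cpow (f y) 2) x.
Proof.
  intros Hf. pose proof (continuous_Re f x Hf) as Hre.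
  pose proof (continuous_Im f x Hf) as Him.
  apply continuous_C.
  - apply (continuous_ext (fun y : R => Re (f y) * Re (f y) - Im (f y) * Im (f y))
                          (fun y : R => Re (Cpow (f y) 2))).
    { intros y. rewrite Re_Csqr. simpl. ring. }
    apply (continuous_minus (V := R_NormedModule));
      apply (continuous_mult (K := R_AbsRing)); assumption.
  - apply (continuous_ext (fun y : R => 2 * (Re (f y) * Im (f y)))
                          (fun y : R => Im (Cpow (f y) 2))).
    { intros y. rewrite Im_Csqr. simpl. ring. }
    apply (continuous_mult (K := R_AbsRing) (fun _ => 2)); [apply continuous_const |].
    apply (continuous_mult (K := R_AbsRing)); assumption.
Qed.

Section Clamp.

Variables lo hi : R.

Definition clamp (x : R) : R := Rmax lo (Rmin hi x).

Lemma clamp_in x : lo <= hi -> lo <= clamp x <= hi.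
Proof. intros. unfold clamp, Rmax, Rmin; repeat destruct Rle_dec; lra. Qed.

Lemma clamp_id x : lo <= x <= hi -> clamp x = x.
Proof. intros. unfold clamp, Rmax, Rmin; repeat destruct Rle_dec; lra. Qed.

Lemma clamp_1_lipschitz x y : Rabs (clamp y - clamp x) <= Rabs (y - x).
Proof.
  unfold clamp, Rmax, Rmin; repeat destruct Rle_dec;
    unfold Rabs; repeat destruct Rcase_abs; lra.
Qed.

Lemma continuous_clamp_comp {V : UniformSpace} (f : R -> V) :
  lo <= hi ->
  (forall t, lo <= t <= hi ->
     filterlim f (within (fun x => lo <= x <= hi) (locally t)) (locally (f t))) ->
  forall x, continuous (fun y => f (clamp y)) x.
Proof.
  intros Hlohi Hf x.
  apply (filterlim_comp _ _ _ clamp f _ (within (fun x => lo <= x <= hi) (locally (clamp x))));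
    [| apply Hf, clamp_in, Hlohi].
  intros P [eps HP]. exists eps. intros y Hy. apply HP; [| apply clamp_in, Hlohi].
  eapply Rle_lt_trans; [apply clamp_1_lipschitz | exact Hy].
Qed.

End Clamp.

Lemma continuous_nonzero_pos (f : R -> R) lo hi :
  (forall x, continuous f x) -> 0 < f lo ->
  (forall t, lo <= t <= hi -> f t <> 0) ->
  forall t, lo <= t <= hi -> 0 < f t.
Proof.
  intros Hf Hlo Hnz t Ht.
  destruct (Rlt_le_dec 0 (f t)) as [Hpos | Hle]; [exact Hpos | exfalso].
  destruct (IVT_gen_consistent f lo t 0 Hf) as [x [Hx Hfx]].
  { pose proof (Hnz t Ht). unfold Rmin, Rmax; repeat destruct Rle_dec; lra. }
  apply (Hnz x); [| exact Hfx]. unfold Rmin, Rmax in Hx; repeat destruct Rle_dec; lra.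
Qed.

(* [Re (p * conj u)] is [+|u|^2] or [-|u|^2], and it cannot change sign. *)
Lemma continuous_sign_choice (p u : R -> C) lo hi :
  (forall x, continuous p x) -> (forall x, continuous u x) ->
  (forall t, lo <= t <= hi -> u t <> 0) ->
  (forall t, lo <= t <= hi -> p t = u t \/ p t = (- u t)%C) ->
  p lo = u lo ->
  forall t, lo <= t <= hi -> p t = u t.
Proof.
  intros Hp Hu Hnz Hpm Hlo t Ht.
  pose (q y := Re (p y) * Re (u y) + Im (p y) * Im (u y)).
  assert (Hq_pm : forall s, lo <= s <= hi ->
    p s = u s /\ q s = Re (u s) ^ 2 + Im (u s) ^ 2 \/ q s = - (Re (u s) ^ 2 + Im (u s) ^ 2)).
  { intros s Hs. unfold q.
    destruct (Hpm s Hs) as [E | E]; rewrite E; [left; split; [reflexivity |] | right];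
      unfold Re, Im; simpl; ring. }
  assert (Hq_pos : forall s, lo <= s <= hi -> 0 < q s).
  { apply continuous_nonzero_pos.
    - intros x. unfold q.
      apply (continuous_plus (V := R_NormedModule));
        apply (continuous_mult (K := R_AbsRing));
        first [apply continuous_Re | apply continuous_Im]; auto.
    - unfold q. rewrite Hlo. pose proof (Cnorm2_pos _ (Hnz lo ltac:(lra))). nra.
    - intros s Hs. pose proof (Cnorm2_pos _ (Hnz s Hs)).
      destruct (Hq_pm s Hs) as [[_ E] | E]; rewrite E; lra. }
  pose proof (Cnorm2_pos _ (Hnz t Ht)). pose proof (Hq_pos t Ht).
  destruct (Hq_pm t Ht) as [[E _] | E]; [exact E | lra].
Qed.

(* [(Re v + Im v)^2 = |v|^2 + Im (v^2) > 0], so [Re v + Im v] keeps the sign it has at [lo]. *)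
Lemma Im_pos_of_Im_sqr_nonneg (v : R -> C) lo hi :
  (forall x, continuous v x) -> v lo = 1%C ->
  (forall t, lo <= t <= hi -> v t <> 0) ->
  (forall t, lo <= t <= hi -> 0 <= Im (Cpow (v t) 2)) ->
  forall t, lo <= t <= hi -> 0 < Im (Cpow (v t) 2) -> 0 < Im (v t).
Proof.
  intros Hv Hlo Hnz Hsq t Ht Hsq_pos.
  assert (Hsum : forall s, lo <= s <= hi -> 0 < Re (v s) + Im (v s)).
  { apply continuous_nonzero_pos.
    - intros x. apply (continuous_plus (V := R_NormedModule));
        [apply continuous_Re | apply continuous_Im]; auto.
    - rewrite Hlo. simpl. lra.
    - intros s Hs E. pose proof (Cnorm2_pos _ (Hnz s Hs)).
      pose proof (Hsq s Hs) as Hsq_s. rewrite Im_Csqr in Hsq_s. nra. }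
  pose proof (Hsum t Ht). rewrite Im_Csqr in Hsq_pos. nra.
Qed.

Section SquareRoot.

Variable a : R.
Hypothesis Ha : 0 < a < 1.

(* [dist2 t = |1 - a e^{it}|^2]. *)
Definition dist2 (t : R) : R := 1 - 2 * a * cos t + a ^ 2.

(* [sqrt_g t = e^{it} (1 - a e^{it}) / |1 - a e^{it}|]. *)
Definition sqrt_g (t : R) : C :=
  ((cos t - 2 * a * cos t ^ 2 + a) / sqrt (dist2 t),
   sin t * (1 - 2 * a * cos t) / sqrt (dist2 t)).

Lemma dist2_pos t : 0 < dist2 t.
Proof. unfold dist2. pose proof (COS_bound t). nra. Qed.

Lemma sqrt_g_sqr t : Cpow (sqrt_g t) 2 = g_fun a t.
Proof.
  pose proof (dist2_pos t) as Hd.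
  pose proof (sqrt_sqrt _ (Rlt_le _ _ Hd)) as Hsq.
  pose proof (sqrt_lt_R0 _ Hd) as Hsqrt_pos.
  pose proof (sin2_cos2 t) as Hsc. unfold Rsqr in Hsc.
  rewrite Csqr_components.
  unfold sqrt_g, g_fun, cis, Re, Im, Cdiv, Cminus, Cinv, Cmult, Copp, Cplus, RtoC; simpl.
  set (r := sqrt (dist2 t)) in *. unfold dist2 in *.
  set (c := cos t) in *. set (s := sin t) in *.
  assert (Hs2 : s ^ 2 = 1 - c ^ 2) by nra.
  assert (Hr2 : r ^ 2 = 1 - 2 * a * c + a ^ 2) by (rewrite <- Hsq; ring).
  f_equal; field_simplify_eq; try lra; rewrite Hr2.
  - replace (s ^ 4) with ((s ^ 2) ^ 2) by ring. rewrite Hs2. ring.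
  - replace (s ^ 5) with (s * (s ^ 2) ^ 2) by ring.
    replace (s ^ 3) with (s * s ^ 2) by ring. rewrite Hs2. ring.
Qed.

Lemma sqrt_g_norm t : Re (sqrt_g t) ^ 2 + Im (sqrt_g t) ^ 2 = 1.
Proof.
  pose proof (dist2_pos t) as Hd.
  pose proof (sqrt_sqrt _ (Rlt_le _ _ Hd)) as Hsq.
  pose proof (sqrt_lt_R0 _ Hd) as Hsqrt_pos.
  pose proof (sin2_cos2 t) as Hsc. unfold Rsqr in Hsc.
  unfold sqrt_g, Re, Im; simpl.
  set (r := sqrt (dist2 t)) in *. unfold dist2 in *.
  set (c := cos t) in *. set (s := sin t) in *.
  field_simplify_eq; [| lra].
  replace (r ^ 2) with (r * r) by ring. rewrite Hsq.
  replace (s ^ 2) with (1 - c ^ 2) by nra. ring.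
Qed.

Lemma sqrt_g_neq0 t : sqrt_g t <> 0.
Proof.
  intros E. pose proof (sqrt_g_norm t) as Hn. rewrite E in Hn.
  unfold Re, Im in Hn; simpl in Hn. lra.
Qed.

Lemma sqrt_g_0 : sqrt_g 0 = 1%C.
Proof.
  unfold sqrt_g, dist2. rewrite cos_0, sin_0.
  replace (1 - 2 * a * 1 + a ^ 2) with ((1 - a) ^ 2) by ring.
  rewrite sqrt_pow2 by lra. unfold RtoC. f_equal; field; lra.
Qed.

Lemma continuous_sqrt_g x : continuous sqrt_g x.
Proof.
  pose proof (dist2_pos x) as Hd. unfold dist2 in Hd.
  apply continuous_C; apply (ex_derive_continuous (K := R_AbsRing) (V := R_NormedModule));
    unfold sqrt_g, dist2, Re, Im; simpl; auto_derive;
    repeat split; try lra; apply Rgt_not_eq, sqrt_lt_R0; lra.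
Qed.

Lemma Im_sqrt_g_nonneg t : a <= 1 / 2 -> 0 <= t <= PI -> 0 <= Im (sqrt_g t).
Proof.
  intros Ha2 Ht. pose proof (sqrt_lt_R0 _ (dist2_pos t)).
  pose proof (sin_ge_0 t ltac:(lra) ltac:(lra)). pose proof (COS_bound t).
  unfold sqrt_g, Im; simpl. apply Rdiv_le_0_compat; [| lra].
  apply Rmult_le_pos; nra.
Qed.

Lemma Im_sqrt_g_pos t : a <= 1 / 2 -> 0 < t < PI -> 0 < Im (sqrt_g t).
Proof.
  intros Ha2 Ht. pose proof (sqrt_lt_R0 _ (dist2_pos t)).
  pose proof (sin_gt_0 t ltac:(lra) ltac:(lra)).
  pose proof (sin2_cos2 t). unfold Rsqr in *. pose proof (COS_bound t).
  unfold sqrt_g, Im; simpl. apply Rdiv_lt_0_compat; [| lra].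
  apply Rmult_lt_0_compat; nra.
Qed.

Lemma inv_add_sub_cos_pos t : 0 < a + / a - 2 * cos t.
Proof.
  replace (a + / a - 2 * cos t) with (dist2 t / a) by (unfold dist2; field; lra).
  apply Rdiv_lt_0_compat; [apply dist2_pos | lra].
Qed.

End SquareRoot.

Section FourthRoot.

Variables (a : R) (w : R -> C).
Hypotheses (Ha : 0 < a < 1) (Hw : is_w a w).

(* [w] is only continuous on [[0, pi]], while Coquelicot's IVT and [RInt_gt_0]
   need continuity on all of [R]; so we extend it by constants. *)
Definition extend_pi (y : R) : C := w (clamp 0 PI y).

Lemma continuous_extend_pi x : continuous extend_pi x.
Proof.
  destruct Hw as [Hw_cont _]. pose proof PI_RGT_0.
  apply continuous_clamp_comp; [lra | exact Hw_cont].
Qed.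

Lemma extend_pi_id t : 0 <= t <= PI -> extend_pi t = w t.
Proof. intros Ht. unfold extend_pi. rewrite clamp_id by exact Ht. reflexivity. Qed.

Lemma extend_pi_sqr t : 0 <= t <= PI -> Cpow (extend_pi t) 2 = sqrt_g a t.
Proof.
  destruct Hw as [_ [Hw4 Hw0]]. pose proof PI_RGT_0.
  revert t. apply continuous_sign_choice.
  - intros x. apply continuous_Csqr, continuous_extend_pi.
  - apply continuous_sqrt_g, Ha.
  - intros s _. apply sqrt_g_neq0, Ha.
  - intros s Hs. apply Csqr_eq_cases.
    replace (Cpow (Cpow (extend_pi s) 2) 2) with (Cpow (extend_pi s) 4) by ring.
    rewrite extend_pi_id, Hw4, sqrt_g_sqr by assumption. reflexivity.
  - rewrite extend_pi_id, Hw0, sqrt_g_0 by (assumption || lra). ring.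
Qed.

Lemma Im_extend_pi_pos t : a <= 1 / 2 -> 0 < t < PI -> 0 < Im (extend_pi t).
Proof.
  intros Ha2 Ht. destruct Hw as [_ [_ Hw0]].
  apply (Im_pos_of_Im_sqr_nonneg extend_pi 0 PI); try lra.
  - exact continuous_extend_pi.
  - rewrite extend_pi_id, Hw0 by lra. reflexivity.
  - intros s Hs E. apply (sqrt_g_neq0 a Ha s).
    rewrite <- extend_pi_sqr, E by exact Hs. ring.
  - intros s Hs. rewrite extend_pi_sqr by exact Hs. apply Im_sqrt_g_nonneg; assumption.
  - rewrite extend_pi_sqr by lra. apply Im_sqrt_g_pos; assumption.
Qed.

Lemma F_with_neg : a <= 1 / 2 -> F_with a w < 0.
Proof.
  intros Ha2. pose proof PI_RGT_0.
  unfold F_with.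
  rewrite (RInt_ext _ (fun t => Im (extend_pi t) / sqrt (a + / a - 2 * cos t))).
  2: { intros t Ht. rewrite Rmin_left, Rmax_right in Ht by lra.
       rewrite extend_pi_id by lra. reflexivity. }
  apply Ropp_lt_gt_0_contravar, RInt_gt_0; [lra | |].
  - intros t Ht. apply Rdiv_lt_0_compat; [apply Im_extend_pi_pos; assumption |].
    apply sqrt_lt_R0, inv_add_sub_cos_pos, Ha.
  - intros x _. apply (continuous_mult (K := R_AbsRing)).
    + apply continuous_Im, continuous_extend_pi.
    + pose proof (inv_add_sub_cos_pos a Ha x).
      apply (ex_derive_continuous (K := R_AbsRing) (V := R_NormedModule)).
      auto_derive. split; [lra |]. split; [| exact I].
      apply Rgt_not_eq, sqrt_lt_R0. lra.
Qed.

End FourthRoot.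

Theorem lemma5p1 :
  forall (alpha : R) (w : R -> C),
    0 < alpha < 1 ->
    is_w alpha w ->
    F_with alpha w = 0 ->
    alpha > 1 / 2.
Proof.
  intros a w Ha Hw HF.
  apply Rnot_le_gt. intros Ha2.
  pose proof (F_with_neg a w Ha Hw Ha2). lra.
Qed.
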